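(* Let $\mathcal T$ be a TBox in which every axiom $\tau$ has the form $\forall G_1.A_1\sqcap\cdots\sqcap\forall G_n.A_n\sqsubseteq\forall H.B$ with $n\ge1$, regular role expressions $G_1,\dots,G_n,H$ and concept names $A_1,\dots,A_n,B$, and let $L,R$ be concept names. Let $\mathcal G_{\mathcal T}$ be the parity pushdown game constructed from $\mathcal T$, $L$, $R$ as described in the context. Then Eve wins $\mathcal G_{\mathcal T}$ from the configuration $(q_R,\bot_s)$ if and only if $L\sqsubseteq_{\mathcal T}R$.
   Context: Logic: $N_C$, $N_R$ are disjoint countably infinite sets of concept names and role names. Regular role expressions: $E ::= \emptyset \mid \varepsilon \mid r \mid (E+E) \mid (EE) \mid E^{*}$ ($r\in N_R$), languages $\mathcal L(E)\subseteq N_R^*$ as usual. Concept descriptions: $C ::= A \mid \top \mid (C\sqcap C) \mid \forall E.C$ ($A\in N_C$). An interpretation $\mathcal I$ has nonempty domain $\Delta^{\mathcal I}$, $A^{\mathcal I}\subseteq\Delta^{\mathcal I}$, $r^{\mathcal I}\subseteq(\Delta^{\mathcal I})^2$; $E^{\mathcal I}$ is the union over $r_1\cdots r_n\in\mathcal L(E)$ of $r_1^{\mathcal I}\circ\cdots\circ r_n^{\mathcal I}$ (identity for the empty word); $\top^{\mathcal I}=\Delta^{\mathcal I}$, $\sqcap$ is intersection, $(\forall E.C)^{\mathcal I}=\{x\mid y\in C^{\mathcal I}$ whenever $(x,y)\in E^{\mathcal I}\}$. $\mathcal I$ is a model of $\mathcal T$ if $K^{\mathcal I}\subseteq M^{\mathcal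 I}$ for every axiom $K\sqsubseteq M$ of $\mathcal T$; $L\sqsubseteq_{\mathcal T}R$ means $L^{\mathcal I}\subseteq R^{\mathcal I}$ in every model $\mathcal I$ of $\mathcal T$. Parity pushdown games: a game is $(P_A,P_E,\Gamma,\Delta,\Omega)$ with finite disjoint sets $P_A,P_E$ of control states of Adam and Eve ($P=P_A\cup P_E$), finite stack alphabet $\Gamma$, finite set of rules $\Delta\subseteq(P\times\Gamma^* )\times(P\times\Gamma^* )$, priority function $\Omega:P\to\mathbb N$. Configurations are pairs $(p,w)\in P\times\Gamma^*$ (top of stack = rightmost letter). For each rule $((p,\alpha),(q,\beta))\in\Delta$ and each $w\in\Gamma^*$ there is a move $(p,w\alpha)\to(q,w\beta)$. A play from $c$ is a maximal sequence of configurations starting in $c$ with consecutive elements related by $\to$ (infinite, or ending in a configuration with no move). A finite play is lost by the owner of the state of its last configuration; an infinite play is won by Eve iff the largest priority of states occurring infinitely often is even. A strategy of Eve assigns to every configuration with state in $P_E$ that has a move one of its successors; a play is consistent with it if Eve's moves follow it. Eve wins from $c$ if she has a strategy such that every play from $c$ consistent with it is won by Eve. Construction of $\mathcal G_{\mathcal T}$: let $\Sigma_C$ be the set of concept names occurring in $\mathcal T$ together with $L,R$, and $\Sigma_R$ the set of role names occurring in $\mathcal T$. Let $\Gamma=\Sigma_R\cup\{\bot_s\}$ with a fresh bottom symbol $\bot_s$. For each $A\in\Sigma_C$ there is an Eve state $q_A$. For each axiom $\tau=(\forall G_1.A_1\sqcap\cdots\sqcap\forall G_n.A_n\sqsubseteq\forall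 H.B)$ of $\mathcal T$ fix nondeterministic finite automata $\mathcal A_H=(Q_H,\Sigma_R,\delta_H,q_{H,0},F_H)$ with language $\mathcal L(H)$ and $\mathcal A_{G_i}=(Q_{G_i},\Sigma_R,\delta_{G_i},q_{G_i,0},F_{G_i})$ with language $\mathcal L(G_i)$, all state sets (over all axioms) pairwise disjoint and disjoint from the other game states. States of $\mathcal A_H$ are Eve states; $p_\tau$ and states of the $\mathcal A_{G_i}$ are Adam states. Rules for $\tau$: $((q_B,\varepsilon),(q,\varepsilon))$ for each $q\in F_H$; $((q,r),(p,\varepsilon))$ for each transition $p\xrightarrow{r}q$ of $\mathcal A_H$; $((q_{H,0},\varepsilon),(p_\tau,\varepsilon))$; and for each $i$: $((p_\tau,\varepsilon),(q_{G_i,0},\varepsilon))$, $((p,\varepsilon),(q,r))$ for each transition $p\xrightarrow{r}q$ of $\mathcal A_{G_i}$, and $((q,\varepsilon),(q_{A_i},\varepsilon))$ for each $q\in F_{G_i}$. Additionally there is an Adam state $p_{\mathrm{win}}$ with the single rule $((q_L,\bot_s),(p_{\mathrm{win}},\bot_s))$ (and no rule leaving $p_{\mathrm{win}}$). $\Omega(p)=0$ for $p\in P_A$ and $\Omega(p)=1$ for $p\in P_E$. *)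

From Stdlib Require Import List Arith.
Import ListNotations.

Definition CN := nat.
Definition RN := nat.

Inductive regex : Type :=
| REmpty : regex
| REps : regex
| RRole : RN -> regex
| RPlus : regex -> regex -> regex
| RCat : regex -> regex -> regex
| RStar : regex -> regex.

Inductive lang : regex -> list RN -> Prop :=
| lang_eps : lang REps []
| lang_role r : lang (RRole r) [r]
| lang_plusl E F w : lang E w -> lang (RPlus E F) w
| lang_plusr E F w : lang F w -> lang (RPlus E F) w
| lang_cat E F u v : lang E u -> lang F v -> lang (RCat E F) (u ++ v)
| lang_star0 E : lang (RStar E) []
| lang_starS E u v : lang E u -> lang (RStar E) v -> lang (RStar E) (u ++ v).

Fixpoint regex_roles (E : regex) : list RN :=
  match E with
  | REmpty | REps => []
  | RRole r => [r]
  | RPlus E F | RCat E F => regex_roles E ++ regex_roles F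
  | RStar E => regex_roles E
  end.

Inductive concept : Type :=
| CName : CN -> concept
| CTop : concept
| CAnd : concept -> concept -> concept
| CAll : regex -> concept -> concept.

Record interp : Type := {
  dom : Type;
  dom_inhabited : inhabited dom;
  cint : CN -> dom -> Prop;
  rint : RN -> dom -> dom -> Prop }.

Fixpoint word_rel (I : interp) (w : list RN) (x y : dom I) : Prop :=
  match w with
  | [] => x = y
  | r :: w' => exists z, rint I r x z /\ word_rel I w' z y
  end.

Definition regex_rel (I : interp) (E : regex) (x y : dom I) : Prop :=
  exists w, lang E w /\ word_rel I w x y.

Fixpoint csem (I : interp) (C : concept) : dom I -> Prop :=
  match C with
  | CName A => cint I A
  | CTop => fun _ => True
  | CAnd C D => fun x => csem I C x /\ csem I D x
  | CAll E C => fun x => forall y, regex_rel I E x y -> csem I C y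
  end.

(* An axiom  forall G1.A1 ⊓ ... ⊓ forall Gn.An ⊑ forall H.B  *)
Record rax : Type := {
  ax_lhs : list (regex * CN);
  ax_H : regex;
  ax_B : CN }.

Fixpoint conj_all (l : list (regex * CN)) : concept :=
  match l with
  | [] => CTop
  | [(G, A)] => CAll G (CName A)
  | (G, A) :: l' => CAnd (CAll G (CName A)) (conj_all l')
  end.

Definition ax_lhs_concept (ax : rax) : concept := conj_all (ax_lhs ax).
Definition ax_rhs_concept (ax : rax) : concept := CAll (ax_H ax) (CName (ax_B ax)).

Definition TBox := list rax.

Definition is_model (I : interp) (T : TBox) : Prop :=
  forall ax, In ax T ->
    forall x, csem I (ax_lhs_concept ax) x -> csem I (ax_rhs_concept ax) x.

Definition subsumed (T : TBox) (L R : CN) : Prop :=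
  forall I : interp, is_model I T ->
    forall x, csem I (CName L) x -> csem I (CName R) x.

Definition sigmaR (T : TBox) : list RN :=
  flat_map (fun ax => regex_roles (ax_H ax)
                      ++ flat_map (fun GA => regex_roles (fst GA)) (ax_lhs ax)) T.

(* States are natural numbers; the (finite) state set is implicit in the
   initial state, transitions and final states. *)
Record nfa : Type := {
  nfa_trans : list (nat * RN * nat);   (* (p, r, q) : p --r--> q *)
  nfa_init : nat;
  nfa_final : list nat }.

Inductive nfa_run (A : nfa) : nat -> list RN -> nat -> Prop :=
| run_nil p : nfa_run A p [] p
| run_cons p r q w s : In (p, r, q) (nfa_trans A) -> nfa_run A q w s ->
                       nfa_run A p (r :: w) s.

Definition nfa_lang (A : nfa) (w : list RN) : Prop :=
  exists q, In q (nfa_final A) /\ nfa_run A (nfa_init A) w q.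

Section Game.
Variables (P G : Type) (is_eve : P -> bool)
          (Delta : list ((P * list G) * (P * list G))) (Omega : P -> nat).

Definition config : Type := (P * list G)%type.

(* top of stack = rightmost letter *)
Definition move (c c' : config) : Prop :=
  exists p alpha q beta w,
    In ((p, alpha), (q, beta)) Delta /\ c = (p, w ++ alpha) /\ c' = (q, w ++ beta).

Definition stuck (c : config) : Prop := forall c', ~ move c c'.

Definition eve_strategy (s : config -> config) : Prop :=
  forall c, is_eve (fst c) = true -> (exists c', move c c') -> move c (s c).

Definition inf_often (f : nat -> config) (p : P) : Prop :=
  forall N, exists n, N <= n /\ fst (f n) = p.

Definition parity_win (f : nat -> config) : Prop :=
  exists p, inf_often f p /\ Nat.even (Omega p) = true /\
            forall q, inf_often f q -> Omega q <= Omega p.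

Definition eve_wins (c : config) : Prop :=
  exists s, eve_strategy s /\
    (forall (n : nat) (f : nat -> config),
        f 0 = c ->
        (forall i, i < n -> move (f i) (f (S i))) ->
        stuck (f n) ->
        (forall i, i < n -> is_eve (fst (f i)) = true -> f (S i) = s (f i)) ->
        is_eve (fst (f n)) = false) /\
    (forall f : nat -> config,
        f 0 = c ->
        (forall i, move (f i) (f (S i))) ->
        (forall i, is_eve (fst (f i)) = true -> f (S i) = s (f i)) ->
        parity_win f).
End Game.

(* Game states; NFA states are tagged with the axiom index (and the conjunct
   index for the A_{G_j}), which makes all state sets pairwise disjoint. *)
Inductive gstate : Type :=
| QC : CN -> gstate
| QH : nat -> nat -> gstate
| Ptau : nat -> gstate
| QG : nat -> nat -> nat -> gstate
| Pwin : gstate.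

(* stack alphabet: Some r = role name r, None = bottom symbol ⊥_s *)
Definition gsym := option RN.

Definition g_is_eve (p : gstate) : bool :=
  match p with
  | QC _ | QH _ _ => true
  | _ => false
  end.

Definition g_prio (p : gstate) : nat := if g_is_eve p then 1 else 0.

Fixpoint index_from {A : Type} (k : nat) (l : list A) : list (nat * A) :=
  match l with
  | [] => []
  | x :: l' => (k, x) :: index_from (S k) l'
  end.

Definition grule := ((gstate * list gsym) * (gstate * list gsym))%type.

Definition axiom_rules (nfaH : nat -> nfa) (nfaG : nat -> nat -> nfa)
    (i : nat) (ax : rax) : list grule :=
  let AH := nfaH i in
  map (fun q => ((QC (ax_B ax), []), (QH i q, []))) (nfa_final AH)
  ++ map (fun t => match t with (p, r, q) => ((QH i q, [Some r]), (QH i p, [])) end)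
         (nfa_trans AH)
  ++ [((QH i (nfa_init AH), []), (Ptau i, []))]
  ++ flat_map (fun jGA => match jGA with (j, (_, Aj)) =>
        let AG := nfaG i j in
        [((Ptau i, []), (QG i j (nfa_init AG), []))]
        ++ map (fun t => match t with (p, r, q) => ((QG i j p, []), (QG i j q, [Some r])) end)
               (nfa_trans AG)
        ++ map (fun q => ((QG i j q, []), (QC Aj, []))) (nfa_final AG)
        end) (index_from 0 (ax_lhs ax)).

Definition game_rules (T : TBox) (L : CN) (nfaH : nat -> nfa)
    (nfaG : nat -> nat -> nfa) : list grule :=
  ((QC L, [None]), (Pwin, [None]))
  :: flat_map (fun iax => axiom_rules nfaH nfaG (fst iax) (snd iax)) (index_from 0 T).

Definition GT_eve_wins (T : TBox) (L : CN) (nfaH : nat -> nfa)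
    (nfaG : nat -> nat -> nfa) (c : gstate * list gsym) : Prop :=
  eve_wins gstate gsym g_is_eve (game_rules T L nfaH nfaG) g_prio c.

Definition good_automata (T : TBox) (nfaH : nat -> nfa)
    (nfaG : nat -> nat -> nfa) : Prop :=
  forall i ax, nth_error T i = Some ax ->
    (forall w, nfa_lang (nfaH i) w <-> lang (ax_H ax) w) /\
    (forall p r q, In (p, r, q) (nfa_trans (nfaH i)) -> In r (sigmaR T)) /\
    (forall j G A, nth_error (ax_lhs ax) j = Some (G, A) ->
       (forall w, nfa_lang (nfaG i j) w <-> lang G w) /\
       (forall p r q, In (p, r, q) (nfa_trans (nfaG i j)) -> In r (sigmaR T))).

From Stdlib Require Import List Arith Lia ClassicalEpsilon Cantor.
Import ListNotations.

(* A configuration [(q_A, ⊥ y)] stands for "the node reached along the role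
   word [y] satisfies [A]": from [q_B] Eve pops a word of [L(H)] and reaches
   [p_τ], where Adam picks a conjunct [∀G_j.A_j] and pushes a word of [L(G_j)]
   before handing [q_{A_j}] back to her; only at [q_L] with empty stack can Eve
   end the play. The priorities make Eve win exactly the plays that visit her
   states finitely often.

   If [L ⊑_T R], interpret each concept name [A] on the tree of role words by
   the words [y] from which Eve wins [(q_A, ⊥ y)] in this well-founded sense:
   this is a model of [T] whose root is in [L], hence in [R]. The local
   well-founded strategies are merged into one positional strategy by letting
   every configuration follow the strategy of least code.

   Conversely, if a model has a node [x0] in [L] but not in [R], Adam maintains
   that the stack spells a path from [x0] to a node refuting the current state,
   picking a violated conjunct at [p_τ] and pushing a finite witness word: Eve
   never reaches [p_win], and she is sent back to her states infinitely often. *)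

Lemma classical_min_nat (Q : nat -> Prop) :
  (exists n, Q n) -> exists n, Q n /\ forall m, Q m -> n <= m.
Proof.
  intros Hex.
  destruct (dec_inh_nat_subset_has_unique_least_element Q (fun n => classic (Q n)) Hex)
    as (n & [Qn Hmin] & _).
  eauto.
Qed.

Lemma classical_min_enc (A : Type) (enc : A -> nat) (Q : A -> Prop) :
  (exists a, Q a) -> exists a, Q a /\ forall b, Q b -> enc a <= enc b.
Proof.
  intros [a Qa].
  destruct (classical_min_nat (fun n => exists a, Q a /\ enc a = n)) as (n & (b & Qb & <-) & Hmin);
    [eauto|].
  exists b. split; [exact Qb|]. intros c Qc. apply Hmin. eauto.
Qed.

Lemma no_decreasing_nat_seq (g : nat -> nat) (N : nat) :
  ~ (forall n, N <= n -> g (S n) < g n).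
Proof.
  intros Hdec.
  assert (Hbound : forall m, g (N + m) + m <= g N).
  { induction m as [|m IH]; [rewrite !Nat.add_0_r; lia|].
    specialize (Hdec (N + m) ltac:(lia)). replace (N + S m) with (S (N + m)) by lia. lia. }
  specialize (Hbound (S (g N))). lia.
Qed.

Lemma inf_often_in_list {A : Type} (l : list A) (g : nat -> A) (Q : A -> Prop) :
  (forall N, exists n, N <= n /\ Q (g n) /\ In (g n) l) ->
  exists a, Q a /\ forall N, exists n, N <= n /\ g n = a.
Proof.
  induction l as [|a l IH]; intros H.
  - destruct (H 0) as (n & _ & _ & []).
  - destruct (classic (forall N, exists n, N <= n /\ g n = a /\ Q (g n))) as [Ha|Hfin].
    + exists a. destruct (Ha 0) as (n & _ & <- & Qn). split; [exact Qn|].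
      intros N. destruct (Ha N) as (m & ? & ? & _). eauto.
    + apply not_all_ex_not in Hfin. destruct Hfin as [N0 HN0].
      apply IH. intros N. destruct (H (max N N0)) as (n & Hle & Qn & [Heq|Hin]).
      * exfalso. apply HN0. exists n. repeat split; auto; lia.
      * exists n. repeat split; auto; lia.
Qed.

Section Game.
Variables (P G : Type) (is_eve : P -> bool)
          (Delta : list ((P * list G) * (P * list G))) (Omega : P -> nat).

Local Notation C := (config P G).
Local Notation move := (move P G Delta).
Local Notation stuck := (stuck P G Delta).
Local Notation eve c := (is_eve (fst c) = true).
Local Notation adam c := (is_eve (fst c) = false).

Inductive adam_path : C -> C -> Prop :=
| adam_path_refl c : adam_path c c
| adam_path_step c c' e : adam c -> move c c' -> adam_path c' e -> adam_path c e.

Lemma adam_path_eve c e : eve c -> adam_path c e -> e = c.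
Proof. intros Hc Hp. destruct Hp; [reflexivity|congruence]. Qed.

Lemma adam_path_snoc c d e : adam_path c d -> adam d -> move d e -> adam_path c e.
Proof.
  induction 1; intros.
  - eapply adam_path_step; eauto. constructor.
  - eapply adam_path_step; eauto.
Qed.

(* Winning with only finitely many visits to Eve's configurations, as an
   inductive (hence well-founded) predicate. *)
Inductive fwin : C -> Prop :=
| fwin_intro d c' : eve d -> move d c' ->
    (forall e, adam_path c' e -> eve e -> fwin e) -> fwin d.

Definition next_eve (s : C -> C) (e d : C) : Prop := adam_path (s d) e /\ eve e.

Definition winning_region (D : C -> Prop) (s : C -> C) : Prop :=
  forall d, D d ->
    eve d /\ move d (s d) /\ (forall e, next_eve s e d -> D e) /\ Acc (next_eve s) d.

Lemma winning_region_ext D s s' :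
  winning_region D s -> (forall x, D x -> s' x = s x) -> winning_region D s'.
Proof.
  intros HD Hs' d Dd.
  destruct (HD d Dd) as (Hd & Hmv & Hcl & Hacc).
  rewrite (Hs' d Dd). refine (conj Hd (conj Hmv (conj _ _))).
  - intros e [Hp He]. rewrite (Hs' d Dd) in Hp. apply Hcl. split; auto.
  - clear Hd Hmv Hcl. revert Dd. induction Hacc as [d _ IH]. intros Dd.
    constructor. intros e [Hp He]. rewrite (Hs' d Dd) in Hp.
    apply IH; [split; auto|]. apply (HD d Dd). split; auto.
Qed.

Lemma winning_region_add D s d c' :
  winning_region D s -> eve d -> move d c' -> (forall e, adam_path c' e -> eve e -> D e) ->
  exists D' s', D' d /\ winning_region D' s'.
Proof.
  intros HD Hd Hmv Hc'.
  destruct (classic (D d)) as [Dd|NDd]; [eauto|].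
  set (s' x := if excluded_middle_informative (D x) then s x else c').
  assert (Hs' : forall x, D x -> s' x = s x).
  { intros x Dx. unfold s'. destruct (excluded_middle_informative (D x)); tauto. }
  assert (Hs'd : s' d = c').
  { unfold s'. destruct (excluded_middle_informative (D d)); tauto. }
  pose proof (winning_region_ext D s s' HD Hs') as HD'.
  assert (Hnext : forall e, next_eve s' e d -> D e).
  { intros e [Hp He]. rewrite Hs'd in Hp. auto. }
  exists (fun x => x = d \/ D x), s'. split; [auto|].
  intros x [-> | Dx].
  - rewrite Hs'd. refine (conj Hd (conj Hmv (conj _ _))); [intros e He; right; auto|].
    constructor. intros e He. apply (HD' e (Hnext e He)).
  - destruct (HD' x Dx) as (H1 & H2 & H3 & H4).
    refine (conj H1 (conj H2 (conj _ H4))). intros e He. right. auto.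
Qed.

Definition region_inv (D : C -> Prop) (s : C -> C) (c : C) : Prop :=
  D c \/ (adam c /\ exists d, D d /\ adam_path (s d) c).

Lemma region_inv_step D s c c' :
  winning_region D s -> region_inv D s c -> move c c' -> (eve c -> c' = s c) ->
  region_inv D s c'.
Proof.
  intros HD [Dc | (Hc & d & Dd & Hp)] Hmv Hcons.
  - destruct (HD c Dc) as (Hc & _ & Hcl & _). rewrite (Hcons Hc).
    destruct (is_eve (fst (s c))) eqn:E.
    + left. apply Hcl. split; [constructor | exact E].
    + right. split; [exact E|]. exists c. split; [exact Dc | constructor].
  - destruct (is_eve (fst c')) eqn:E.
    + left. apply (HD d Dd). split; [eapply adam_path_snoc; eauto | exact E].
    + right. split; [exact E|]. exists d. split; [exact Dd | eapply adam_path_snoc; eauto].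
Qed.

Lemma region_play_eventually_adam D s (f : nat -> C) :
  winning_region D s -> (forall i, move (f i) (f (S i))) ->
  (forall i, eve (f i) -> f (S i) = s (f i)) -> D (f 0) ->
  exists N, forall n, N <= n -> adam (f n).
Proof.
  intros HD Hmv Hcons H0.
  enough (Hgen : forall x, Acc (next_eve s) x -> forall i, f i = x -> D x ->
                   exists N, forall n, N <= n -> adam (f n))
    by (apply (Hgen (f 0)) with 0; auto; apply HD; auto).
  intros x Hacc. induction Hacc as [x _ IH]. intros i <- Dx.
  destruct (classic (exists m, i < m /\ eve (f m))) as [Hex|Hno].
  - destruct (classical_min_nat _ Hex) as (m & [Him Hem] & Hmin).
    assert (Hpath : forall k, i < k <= m -> adam_path (s (f i)) (f k)).
    { induction k as [|k IHk]; intros Hk; [lia|].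
      destruct (Nat.eq_dec i k) as [<-|Hne].
      - rewrite <- Hcons by apply (HD _ Dx). constructor.
      - apply adam_path_snoc with (f k); [apply IHk; lia | | apply Hmv].
        destruct (is_eve (fst (f k))) eqn:E; [exfalso | reflexivity].
        assert (m <= k) by (apply Hmin; split; [lia | exact E]). lia. }
    assert (Hnext : next_eve s (f m) (f i)) by (split; [apply Hpath; lia | exact Hem]).
    apply (IH (f m) Hnext m eq_refl). apply (HD _ Dx). exact Hnext.
  - exists (S i). intros n Hn. destruct (is_eve (fst (f n))) eqn:E; [exfalso | reflexivity].
    apply Hno. exists n. split; [lia | exact E].
Qed.

Hypothesis Omega_eve : forall p, Omega p = if is_eve p then 1 else 0.

Definition targets : list P := map (fun rl => fst (snd rl)) Delta.

Lemma move_target c c' : move c c' -> In (fst c') targets.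
Proof.
  intros (p & alpha & q & beta & w & Hin & _ & ->).
  apply in_map_iff. exists ((p, alpha), (q, beta)). auto.
Qed.

Lemma parity_win_iff_eventually_adam (f : nat -> C) :
  (forall i, move (f i) (f (S i))) ->
  parity_win P G Omega f <-> exists N, forall n, N <= n -> adam (f n).
Proof.
  intros Hmv. split.
  - intros (p & _ & Hev & Hmax). apply NNPP. intros Hno.
    destruct (inf_often_in_list targets (fun n => fst (f n)) (fun q => is_eve q = true))
      as (q & Hq & Hqinf).
    { intros N. apply NNPP. intros Hnot. apply Hno. exists (S N). intros [|m] Hm; [lia|].
      destruct (is_eve (fst (f (S m)))) eqn:E; [exfalso | reflexivity].
      apply Hnot. exists (S m). split; [lia | split; [exact E | apply (move_target (f m)); auto]]. }
    specialize (Hmax q Hqinf). rewrite !Omega_eve, Hq in Hmax. rewrite Omega_eve in Hev.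
    destruct (is_eve p); [discriminate | lia].
  - intros [N HN].
    destruct (inf_often_in_list targets (fun n => fst (f n)) (fun q => is_eve q = false))
      as (a & Ha & Hainf).
    { intros M. exists (S (max M N)).
      split; [lia | split; [apply HN; lia | apply (move_target (f (max M N))); auto]]. }
    exists a. split; [exact Hainf|]. rewrite Omega_eve, Ha. split; [reflexivity|].
    intros q Hq. destruct (Hq N) as (n & Hn & <-). rewrite Omega_eve, (HN n Hn). lia.
Qed.

Section Union.
Variable enc : C -> nat.
Hypothesis enc_inj : forall a b, enc a = enc b -> a = b.

(* Each configuration follows the region of least code containing it; a step
   either stays in that region, where its own well-foundedness applies, or
   strictly decreases the code of the owning region. *)
Lemma winning_region_union (E : C -> Prop) :
  (forall d, E d -> exists D s, D d /\ winning_region D s) ->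
  exists D s, (forall d, E d -> D d) /\ winning_region D s.
Proof.
  intros HE.
  destruct (choice (fun d (Ds : (C -> Prop) * (C -> C)) =>
              E d -> fst Ds d /\ winning_region (fst Ds) (snd Ds))) as [reg Hreg].
  { intros d. destruct (classic (E d)) as [Ed|NEd].
    - destruct (HE d Ed) as (D & s & HDs). exists (D, s). auto.
    - exists ((fun _ : C => False), (fun x : C => x)). tauto. }
  set (owns k x := E k /\ fst (reg k) x).
  destruct (choice (fun x k => (exists k, owns k x) ->
              owns k x /\ forall k', owns k' x -> enc k <= enc k')) as [own Hown].
  { intros x. destruct (classic (exists k, owns k x)) as [Hex|Hno].
    - destruct (classical_min_enc _ enc _ Hex) as (k & Hk). eauto.
    - exists x. tauto. }
  set (s x := snd (reg (own x)) x).
  assert (Hwf : forall n k x, enc k = n -> owns k x -> Acc (next_eve s) x).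
  { induction n as [n IHn] using (well_founded_induction lt_wf).
    intros k x <- [Ek Hx].
    assert (Hacc : Acc (next_eve (snd (reg k))) x) by apply (proj2 (Hreg k Ek) x Hx).
    revert Hx. induction Hacc as [x _ IH]. intros Hx.
    destruct (Hown x (ex_intro _ k (conj Ek Hx))) as (Hox & Hmin).
    specialize (Hmin k (conj Ek Hx)).
    destruct (Nat.lt_ge_cases (enc (own x)) (enc k)) as [Hlt|Hge].
    - exact (IHn _ Hlt (own x) x eq_refl Hox).
    - assert (Hk : own x = k) by (apply enc_inj; lia).
      constructor. intros e [Hp He]. unfold s in Hp. rewrite Hk in Hp.
      apply IH; [split; auto|]. apply (proj2 (Hreg k Ek) x Hx). split; auto. }
  exists (fun x => exists k, owns k x), s. split.
  - intros d Ed. exists d. split; [exact Ed | apply Hreg; exact Ed].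
  - intros x Hx. destruct (Hown x Hx) as ([Eo Ho] & _).
    destruct (proj2 (Hreg _ Eo) x Ho) as (Hev & Hmv & Hcl & _).
    refine (conj Hev (conj Hmv (conj _ (Hwf _ _ x eq_refl (conj Eo Ho))))).
    intros e He. exists (own x). split; [exact Eo|]. apply Hcl. exact He.
Qed.

Lemma fwin_region d : fwin d -> exists D s, D d /\ winning_region D s.
Proof.
  induction 1 as [d c' Hd Hmv _ IH].
  destruct (winning_region_union (fun e => adam_path c' e /\ eve e)) as (D & s & HE & HD).
  { intros e [Hp He]. exact (IH e Hp He). }
  apply (winning_region_add D s d c'); auto.
Qed.

Lemma fwin_strategy : exists D s,
  (forall d, fwin d -> D d) /\ winning_region D s /\ eve_strategy P G is_eve Delta s.
Proof.
  destruct (winning_region_union fwin fwin_region) as (D & s & Hfw & HD).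
  destruct (choice (fun x y => (D x -> y = s x) /\ ((exists y', move x y') -> move x y)))
    as [t Ht].
  { intros x. destruct (classic (D x)) as [Dx|NDx].
    - exists (s x). split; [auto|]. intros _. apply (HD x Dx).
    - destruct (classic (exists y', move x y')) as [[y Hy]|Hno]; [exists y|exists x]; tauto. }
  exists D, t. split; [exact Hfw|split].
  - apply (winning_region_ext D s t HD). intros x Dx. apply Ht. exact Dx.
  - intros c _ Hc. apply Ht. exact Hc.
Qed.

Theorem fwin_eve_wins c0 : fwin c0 -> eve_wins P G is_eve Delta Omega c0.
Proof.
  intros Hc0. destruct fwin_strategy as (D & s & Hfw & HD & Hs).
  exists s. split; [exact Hs|].
  assert (Hinv : forall n (f : nat -> C), f 0 = c0 ->
            (forall i, i < n -> move (f i) (f (S i))) ->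
            (forall i, i < n -> eve (f i) -> f (S i) = s (f i)) -> region_inv D s (f n)).
  { intros n f H0 Hmv Hcons.
    enough (forall m, m <= n -> region_inv D s (f m)) by auto.
    induction m as [|m IH]; intros Hm; [left; rewrite H0; auto|].
    apply region_inv_step with (f m);
      [exact HD | apply IH; lia | apply Hmv; lia | intros He; apply Hcons; [lia | exact He]]. }
  split.
  - intros n f H0 Hmv Hstk Hcons.
    destruct (Hinv n f H0 Hmv Hcons) as [Dn | [Hadam _]]; [exfalso | exact Hadam].
    apply (Hstk (s (f n))). apply (HD _ Dn).
  - intros f H0 Hmv Hcons. apply parity_win_iff_eventually_adam; [exact Hmv|].
    apply (region_play_eventually_adam D s f HD Hmv Hcons). rewrite H0. auto.
Qed.

End Union.

Section Refutation.
Variable Inv : C -> nat -> Prop.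
Hypothesis inv_eve_move : forall c k c', Inv c k -> eve c -> move c c' -> exists k', Inv c' k'.
Hypothesis inv_adam_move : forall c k, Inv c k -> adam c ->
  exists c' k', move c c' /\ Inv c' k' /\ (adam c' -> k' < k).

Definition counter_move (s : C -> C) (x y : C * nat) : Prop :=
  Inv (fst x) (snd x) -> ~ stuck (fst x) ->
    move (fst x) (fst y) /\ Inv (fst y) (snd y) /\
    (eve (fst x) -> fst y = s (fst x)) /\ (adam (fst x) -> adam (fst y) -> snd y < snd x).

Lemma counter_step (s : C -> C) : eve_strategy P G is_eve Delta s ->
  exists step, forall x, counter_move s x (step x).
Proof.
  intros Hs. apply (choice (counter_move s)). intros [c k].
  destruct (classic (Inv c k /\ ~ stuck c)) as [[Hi Hns]|Hno];
    [|exists (c, k); intros Hi Hns; tauto].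
  destruct (is_eve (fst c)) eqn:E.
  - assert (Hmv : move c (s c)).
    { apply Hs; [exact E|]. apply NNPP. intros Hno. apply Hns. intros c' Hc'. eauto. }
    destruct (inv_eve_move c k (s c) Hi E Hmv) as [k' Hk'].
    exists (s c, k'). intros _ _. simpl. repeat split; auto. congruence.
  - destruct (inv_adam_move c k Hi E) as (c' & k' & H). exists (c', k'). intros _ _. simpl.
    destruct H as (Hmv & Hi' & Hlt). repeat split; auto. congruence.
Qed.

Theorem inv_not_eve_wins c0 k0 : Inv c0 k0 -> ~ eve_wins P G is_eve Delta Omega c0.
Proof.
  intros H0 (s & Hs & Hfin & Hinf).
  destruct (counter_step s Hs) as [step Hstep].
  set (h n := Nat.iter n step (c0, k0)). set (f n := fst (h n)).
  assert (Hlive : forall n, Inv (f n) (snd (h n)) -> adam (f n) -> ~ stuck (f n)).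
  { intros n Hi Ha Hst. destruct (inv_adam_move _ _ Hi Ha) as (c' & _ & Hmv & _).
    exact (Hst c' Hmv). }
  assert (Hinv : forall n, (forall m, m < n -> ~ stuck (f m)) -> Inv (f n) (snd (h n))).
  { induction n as [|n IH]; intros Hns; [exact H0|].
    apply (Hstep (h n)); [apply IH; auto | apply Hns; lia]. }
  destruct (classic (exists n, stuck (f n))) as [Hex|Hnone].
  - destruct (classical_min_nat _ Hex) as (n & Hn & Hmin).
    assert (Hbefore : forall m, m < n -> ~ stuck (f m))
      by (intros m Hm Hst; specialize (Hmin m Hst); lia).
    apply (Hlive n (Hinv n Hbefore)); [|exact Hn].
    assert (Hok : forall i, i < n -> Inv (f i) (snd (h i)) /\ ~ stuck (f i)).
    { intros i Hi. split; [apply Hinv; intros m Hm|]; apply Hbefore; lia. }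
    apply (Hfin n f eq_refl); [| exact Hn |]; intros i Hi;
      destruct (Hok i Hi); apply (Hstep (h i)); assumption.
  - assert (Hns : forall n, ~ stuck (f n)) by eauto.
    assert (Hspec := fun n => Hstep (h n) (Hinv n (fun m _ => Hns m)) (Hns n)).
    assert (Hmv : forall n, move (f n) (f (S n))) by apply Hspec.
    destruct (proj1 (parity_win_iff_eventually_adam f Hmv)
                (Hinf f eq_refl Hmv (fun n => proj1 (proj2 (proj2 (Hspec n))))))
      as [N HN].
    apply (no_decreasing_nat_seq (fun n => snd (h n)) N). intros n Hn.
    destruct (Hspec n) as (_ & _ & _ & Hdec).
    exact (Hdec (HN n Hn) (HN (S n) ltac:(lia))).
Qed.

End Refutation.
End Game.

Definition stk (y : list RN) : list gsym := None :: map Some y.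

Lemma stk_app y r : stk (y ++ [r]) = stk y ++ [Some r].
Proof. unfold stk. rewrite map_app. reflexivity. Qed.

Lemma stk_eq_snoc_some y w r : w ++ [Some r] = stk y -> exists y', y = y' ++ [r] /\ w = stk y'.
Proof.
  destruct y as [|a y] using rev_ind; intros H.
  - destruct w as [|b [|c w]]; discriminate.
  - rewrite stk_app in H. apply app_inj_tail in H. destruct H as [-> H].
    injection H as ->. eauto.
Qed.

Lemma stk_eq_snoc_none y w : w ++ [None] = stk y -> y = [].
Proof.
  destruct y as [|a y] using rev_ind; intros H; [reflexivity|].
  rewrite stk_app in H. apply app_inj_tail in H. destruct H as [_ H]. discriminate.
Qed.

Lemma in_index_from_0 {A : Type} (l : list A) n a :
  In (n, a) (index_from 0 l) <-> nth_error l n = Some a.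
Proof.
  enough (H : forall k, In (n, a) (index_from k l) <-> k <= n /\ nth_error l (n - k) = Some a)
    by (rewrite H, Nat.sub_0_r; intuition lia).
  induction l as [|b l IH]; intros k; simpl.
  - split; [tauto|]. intros [_ H]. destruct (n - k); discriminate.
  - rewrite IH. split.
    + intros [H|[H1 H2]].
      * injection H as -> ->. rewrite Nat.sub_diag. auto.
      * split; [lia|]. replace (n - k) with (S (n - S k)) by lia. exact H2.
    + intros [H1 H2]. destruct (Nat.eq_dec n k) as [->|Hne].
      * rewrite Nat.sub_diag in H2. injection H2 as ->. auto.
      * right. split; [lia|]. replace (n - k) with (S (n - S k)) in H2 by lia. exact H2.
Qed.

Lemma nfa_run_snoc A p u r q : nfa_run A p (u ++ [r]) q ->
  exists p', nfa_run A p u p' /\ In (p', r, q) (nfa_trans A).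
Proof.
  revert p. induction u as [|a u IH]; intros p H; simpl in H.
  - inversion H as [|p0 r0 q0 w0 s0 Ht Hr]; subst. inversion Hr; subst.
    exists p. split; [constructor | exact Ht].
  - inversion H as [|p0 r0 q0 w0 s0 Ht Hr]; subst. destruct (IH _ Hr) as (p' & H1 & H2).
    exists p'. split; [econstructor; eauto | exact H2].
Qed.

Lemma word_rel_app I u v x y :
  word_rel I (u ++ v) x y <-> exists z, word_rel I u x z /\ word_rel I v z y.
Proof.
  revert x. induction u as [|a u IH]; intros x; simpl.
  - split; [eauto|]. intros (z & -> & H). exact H.
  - split.
    + intros (z1 & H1 & H2). apply IH in H2. destruct H2 as (z & H2 & H3). eauto.
    + intros (z & (z1 & H1 & H2) & H3). exists z1. split; [exact H1|]. apply IH. eauto.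
Qed.

Lemma conj_all_sem I l x : csem I (conj_all l) x <->
  (forall G A, In (G, A) l -> csem I (CAll G (CName A)) x).
Proof.
  induction l as [|[G A] l IH].
  - simpl. split; [intros _ G A []|auto].
  - assert (Hcons : csem I (conj_all ((G, A) :: l)) x <->
                    csem I (CAll G (CName A)) x /\ csem I (conj_all l) x).
    { destruct l as [|GA l]; simpl; [tauto|reflexivity]. }
    rewrite Hcons, IH. split.
    + intros [H1 H2] G' A' [E|Hin]; [injection E as <- <-|]; auto.
    + intros H. split; [apply H; left; reflexivity|]. intros G' A' Hin. apply H. right. exact Hin.
Qed.

Section Rules.
Variables (T : TBox) (L : CN) (nfaH : nat -> nfa) (nfaG : nat -> nat -> nfa).

Inductive gt_rule : grule -> Prop :=
| gt_win : gt_rule ((QC L, [None]), (Pwin, [None]))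
| gt_start i ax qf : nth_error T i = Some ax -> In qf (nfa_final (nfaH i)) ->
    gt_rule ((QC (ax_B ax), []), (QH i qf, []))
| gt_pop i ax p r q : nth_error T i = Some ax -> In (p, r, q) (nfa_trans (nfaH i)) ->
    gt_rule ((QH i q, [Some r]), (QH i p, []))
| gt_tau i ax : nth_error T i = Some ax ->
    gt_rule ((QH i (nfa_init (nfaH i)), []), (Ptau i, []))
| gt_pick i ax j G A : nth_error T i = Some ax -> nth_error (ax_lhs ax) j = Some (G, A) ->
    gt_rule ((Ptau i, []), (QG i j (nfa_init (nfaG i j)), []))
| gt_push i ax j G A p r q : nth_error T i = Some ax -> nth_error (ax_lhs ax) j = Some (G, A) ->
    In (p, r, q) (nfa_trans (nfaG i j)) ->
    gt_rule ((QG i j p, []), (QG i j q, [Some r]))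
| gt_fin i ax j G A qf : nth_error T i = Some ax -> nth_error (ax_lhs ax) j = Some (G, A) ->
    In qf (nfa_final (nfaG i j)) ->
    gt_rule ((QG i j qf, []), (QC A, [])).

Lemma in_game_rules rl : In rl (game_rules T L nfaH nfaG) <-> gt_rule rl.
Proof.
  unfold game_rules. simpl. rewrite in_flat_map. split.
  - intros [<-|[[i ax] [Hin Hr]]]; [constructor|].
    apply in_index_from_0 in Hin. simpl in Hr. unfold axiom_rules in Hr.
    rewrite !in_app_iff in Hr. destruct Hr as [Hr|[Hr|[Hr|Hr]]].
    + apply in_map_iff in Hr. destruct Hr as [q [<- Hq]]. eapply gt_start; eauto.
    + apply in_map_iff in Hr. destruct Hr as [[[p r] q] [<- Hq]]. eapply gt_pop; eauto.
    + destruct Hr as [<-|[]]. eapply gt_tau; eauto.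
    + apply in_flat_map in Hr. destruct Hr as [[j [G A]] [Hj Hr]].
      apply in_index_from_0 in Hj. simpl in Hr. destruct Hr as [<-|Hr].
      * eapply gt_pick; eauto.
      * rewrite in_app_iff in Hr. destruct Hr as [Hr|Hr]; apply in_map_iff in Hr.
        -- destruct Hr as [[[p r] q] [<- Hq]]. eapply gt_push; eauto.
        -- destruct Hr as [q [<- Hq]]. eapply gt_fin; eauto.
  - intros H. destruct H; [left; reflexivity|right..];
      exists (i, ax); (split; [apply in_index_from_0; auto|]); simpl; unfold axiom_rules;
      rewrite !in_app_iff.
    + left. apply in_map_iff. eauto.
    + right; left. apply in_map_iff. exists (p, r, q). auto.
    + right; right; left. left. reflexivity.
    + right; right; right. apply in_flat_map. exists (j, (G, A)).
      split; [apply in_index_from_0; auto|]. left. reflexivity.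
    + right; right; right. apply in_flat_map. exists (j, (G, A)).
      split; [apply in_index_from_0; auto|]. simpl. right.
      apply in_app_iff. left. apply in_map_iff.
      exists (p, r, q). auto.
    + right; right; right. apply in_flat_map. exists (j, (G, A)).
      split; [apply in_index_from_0; auto|]. simpl. right.
      apply in_app_iff. right. apply in_map_iff.
      exists qf. auto.
Qed.

Lemma gt_rule_from_QG i ax j G A p alpha c beta :
  nth_error T i = Some ax -> nth_error (ax_lhs ax) j = Some (G, A) ->
  gt_rule ((QG i j p, alpha), (c, beta)) ->
  alpha = [] /\
  ((exists r q, In (p, r, q) (nfa_trans (nfaG i j)) /\ c = QG i j q /\ beta = [Some r]) \/
   (In p (nfa_final (nfaG i j)) /\ c = QC A /\ beta = [])).
Proof.
  intros Hi Hj Hr. inversion Hr; subst; split; try reflexivity.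
  - left. eauto.
  - right. split; [assumption | split; [congruence | reflexivity]].
Qed.

Lemma gt_rule_from_Ptau i ax alpha c beta :
  nth_error T i = Some ax -> gt_rule ((Ptau i, alpha), (c, beta)) ->
  alpha = [] /\ beta = [] /\
  exists j G A, nth_error (ax_lhs ax) j = Some (G, A) /\ c = QG i j (nfa_init (nfaG i j)).
Proof.
  intros Hi Hr. inversion Hr; subst. split; [reflexivity | split; [reflexivity|]].
  assert (ax0 = ax) as -> by congruence. eauto.
Qed.

Lemma gt_rule_from_Pwin alpha c beta : ~ gt_rule ((Pwin, alpha), (c, beta)).
Proof. intros Hr. inversion Hr. Qed.

Local Notation gmove := (move gstate gsym (game_rules T L nfaH nfaG)).

Lemma gt_move p alpha q beta w :
  gt_rule ((p, alpha), (q, beta)) -> gmove (p, w ++ alpha) (q, w ++ beta).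
Proof. intros H. exists p, alpha, q, beta, w. split; [apply in_game_rules; exact H | auto]. Qed.

Lemma gt_move_nil p q w : gt_rule ((p, []), (q, [])) -> gmove (p, w) (q, w).
Proof. intros H. pose proof (gt_move p [] q [] w H) as K. rewrite app_nil_r in K. exact K. Qed.

Lemma gt_move_inv c c' : gmove c c' -> exists p alpha q beta w,
  gt_rule ((p, alpha), (q, beta)) /\ c = (p, w ++ alpha) /\ c' = (q, w ++ beta).
Proof.
  intros (p & alpha & q & beta & w & Hin & Hc). apply in_game_rules in Hin.
  exists p, alpha, q, beta, w. auto.
Qed.

End Rules.

Section EveWins.
Variables (T : TBox) (L : CN) (nfaH : nat -> nfa) (nfaG : nat -> nat -> nfa).
Hypothesis hauto : good_automata T nfaH nfaG.

Local Notation rules := (game_rules T L nfaH nfaG).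
Local Notation gpath := (adam_path gstate gsym g_is_eve rules).
Local Notation gfwin := (fwin gstate gsym g_is_eve rules).

Lemma qg_adam_path i ax j G A p y e :
  nth_error T i = Some ax -> nth_error (ax_lhs ax) j = Some (G, A) ->
  gpath (QG i j p, stk y) e -> g_is_eve (fst e) = true ->
  exists v qf, nfa_run (nfaG i j) p v qf /\ In qf (nfa_final (nfaG i j)) /\
    e = (QC A, stk (y ++ v)).
Proof.
  intros Hi Hj Hp He. remember (QG i j p, stk y) as c eqn:Ec. revert p y Ec.
  induction Hp as [c|c c' e Hc Hm Hp IH]; intros p y ->; [discriminate|].
  apply gt_move_inv in Hm. destruct Hm as (p0 & al & c1 & be & w & Hr & E1 & ->).
  injection E1 as <- Hw.
  destruct (gt_rule_from_QG T L nfaH nfaG i ax j G A p _ _ _ Hi Hj Hr)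
    as (-> & [(r & q & Ht & -> & ->) | (Hp0 & -> & ->)]); rewrite app_nil_r in Hw; subst w.
  - destruct (IH He q (y ++ [r])) as (v & qf & Hrun & Hqf & ->); [rewrite stk_app; reflexivity|].
    exists (r :: v), qf. split; [econstructor; eauto|]. split; [exact Hqf|].
    rewrite <- app_assoc. reflexivity.
  - apply adam_path_eve in Hp; [subst e | reflexivity].
    exists [], p. rewrite !app_nil_r. split; [constructor | auto].
Qed.

Lemma ptau_adam_path i ax x e :
  nth_error T i = Some ax -> gpath (Ptau i, stk x) e -> g_is_eve (fst e) = true ->
  exists j G A v, nth_error (ax_lhs ax) j = Some (G, A) /\ nfa_lang (nfaG i j) v /\
    e = (QC A, stk (x ++ v)).
Proof.
  intros Hi Hp He. inversion Hp as [|c c' e' Hc Hm Hp']; subst; [discriminate|].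
  apply gt_move_inv in Hm. destruct Hm as (p0 & al & c1 & be & w & Hr & E1 & ->).
  injection E1 as <- Hw.
  destruct (gt_rule_from_Ptau T L nfaH nfaG i ax _ _ _ Hi Hr) as (-> & -> & j & G & A & Hj & ->).
  rewrite app_nil_r in Hw, Hp'. subst w.
  destruct (qg_adam_path i ax j G A _ x e Hi Hj Hp' He) as (v & qf & Hrun & Hqf & ->).
  exists j, G, A, v. split; [exact Hj | split; [exists qf; auto | reflexivity]].
Qed.

Lemma fwin_QC_L : gfwin (QC L, stk []).
Proof.
  apply fwin_intro with (Pwin, [None]);
    [reflexivity | apply (gt_move _ _ _ _ _ _ _ _ []); constructor |].
  intros e Hp He. inversion Hp as [|c c' e' Hc Hm]; subst; [discriminate|].
  apply gt_move_inv in Hm. destruct Hm as (p0 & al & c1 & be & w & Hr & E1 & _).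
  injection E1 as <- _. exfalso. exact (gt_rule_from_Pwin _ _ _ _ _ _ _ Hr).
Qed.

Lemma fwin_axiom i ax x u :
  nth_error T i = Some ax ->
  (forall j G A v, nth_error (ax_lhs ax) j = Some (G, A) -> nfa_lang (nfaG i j) v ->
     gfwin (QC A, stk (x ++ v))) ->
  nfa_lang (nfaH i) u -> gfwin (QC (ax_B ax), stk (x ++ u)).
Proof.
  intros Hi Hprem (qf & Hqf & Hrun).
  assert (Htau : gfwin (QH i (nfa_init (nfaH i)), stk x)).
  { apply fwin_intro with (Ptau i, stk x); [reflexivity | apply gt_move_nil; econstructor; eauto|].
    intros e Hp He. destruct (ptau_adam_path i ax x e Hi Hp He) as (j & G & A & v & Hj & Hv & ->).
    exact (Hprem j G A v Hj Hv). }
  assert (Hpop : forall w q, nfa_run (nfaH i) (nfa_init (nfaH i)) w q ->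
                   gfwin (QH i q, stk (x ++ w))).
  { induction w as [|r w IH] using rev_ind; intros q Hr.
    - inversion Hr; subst. rewrite app_nil_r. exact Htau.
    - apply nfa_run_snoc in Hr. destruct Hr as (p & Hr & Ht).
      apply fwin_intro with (QH i p, stk (x ++ w)); [reflexivity | |].
      + rewrite app_assoc, stk_app. rewrite <- (app_nil_r (stk (x ++ w))) at 2.
        apply gt_move. econstructor; eauto.
      + intros e Hp He. apply adam_path_eve in Hp; [subst e; auto | reflexivity]. }
  apply fwin_intro with (QH i qf, stk (x ++ u));
    [reflexivity | apply gt_move_nil; econstructor; eauto |].
  intros e Hp He. apply adam_path_eve in Hp; [subst e; auto | reflexivity].
Qed.

Definition win_model : interp :=
  {| dom := list RN; dom_inhabited := inhabits []; cint A y := gfwin (QC A, stk y);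
     rint r x y := y = x ++ [r] |}.

Lemma win_model_word w (x y : list RN) : word_rel win_model w x y <-> y = x ++ w.
Proof.
  revert x. induction w as [|r w IH]; intros x; simpl.
  - rewrite app_nil_r. split; auto.
  - split.
    + intros (z & -> & H). apply IH in H. subst. rewrite <- app_assoc. reflexivity.
    + intros ->. exists (x ++ [r]). split; [reflexivity|].
      apply IH. rewrite <- app_assoc. reflexivity.
Qed.

Lemma win_model_is_model : is_model win_model T.
Proof.
  intros ax Hin x Hlhs. apply In_nth_error in Hin. destruct Hin as [i Hi].
  unfold ax_lhs_concept in Hlhs. rewrite conj_all_sem in Hlhs.
  destruct (hauto i ax Hi) as (HH & _ & HG).
  intros y (u & Hu & Hw). apply win_model_word in Hw. subst y.
  apply (fwin_axiom i ax x u Hi); [|apply HH; exact Hu].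
  intros j G A v Hj Hv. apply (Hlhs G A (nth_error_In _ _ Hj)).
  exists v. split; [apply (HG j G A Hj); exact Hv | apply win_model_word; reflexivity].
Qed.

Lemma subsumed_fwin R : subsumed T L R -> gfwin (QC R, stk []).
Proof. intros H. exact (H win_model win_model_is_model [] fwin_QC_L). Qed.

End EveWins.

Section AdamWins.
Variables (T : TBox) (L : CN) (nfaH : nat -> nfa) (nfaG : nat -> nat -> nfa).
Hypothesis hauto : good_automata T nfaH nfaG.
Variables (I : interp) (x0 : dom I).
Hypothesis I_model : is_model I T.
Hypothesis I_L : cint I L x0.

Local Notation gmove := (move gstate gsym (game_rules T L nfaH nfaG)).

Definition refutes_H (i q : nat) (z : dom I) : Prop :=
  exists ax u qf zf, nth_error T i = Some ax /\ nfa_run (nfaH i) q u qf /\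
    In qf (nfa_final (nfaH i)) /\ word_rel I u z zf /\ ~ cint I (ax_B ax) zf.

Definition refutes_G (i j q k : nat) (z : dom I) : Prop :=
  exists ax G A v qf zf, nth_error T i = Some ax /\ nth_error (ax_lhs ax) j = Some (G, A) /\
    nfa_run (nfaG i j) q v qf /\ In qf (nfa_final (nfaG i j)) /\ length v = k /\
    word_rel I v z zf /\ ~ cint I A zf.

Definition refutes (p : gstate) (k : nat) (z : dom I) : Prop :=
  match p with
  | QC A => ~ cint I A z
  | QH i q => refutes_H i q z
  | Ptau i => exists j k', k' < k /\ refutes_G i j (nfa_init (nfaG i j)) k' z
  | QG i j q => refutes_G i j q k z
  | Pwin => False
  end.

(* Adam's invariant: the stack spells a path from [x0] to a node [z] at which
   the current state is refuted; [k] bounds the length of the word that Adam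
   still has to push. *)
Definition counter_inv (c : config gstate gsym) (k : nat) : Prop :=
  exists y z, snd c = stk y /\ word_rel I y x0 z /\ refutes (fst c) k z.

Lemma refutes_H_init_lhs i ax z :
  nth_error T i = Some ax -> refutes_H i (nfa_init (nfaH i)) z ->
  ~ csem I (ax_lhs_concept ax) z.
Proof.
  intros Hi (ax' & u & qf & zf & Hi' & Hrun & Hqf & Hu & HB) Hlhs.
  rewrite Hi in Hi'. injection Hi' as <-.
  apply HB. apply (I_model ax (nth_error_In _ _ Hi) z Hlhs).
  exists u. split; [apply (proj1 (hauto i ax Hi)); exists qf; auto | exact Hu].
Qed.

Lemma not_lhs_refutes_G i ax z :
  nth_error T i = Some ax -> ~ csem I (ax_lhs_concept ax) z ->
  exists j k, refutes_G i j (nfa_init (nfaG i j)) k z.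
Proof.
  intros Hi Hlhs. unfold ax_lhs_concept in Hlhs. rewrite conj_all_sem in Hlhs.
  apply NNPP. intros Hno. apply Hlhs. intros G A Hin zf (v & Hv & Hw).
  apply NNPP. intros HA. apply In_nth_error in Hin. destruct Hin as [j Hj].
  destruct (proj2 (proj1 (proj2 (proj2 (hauto i ax Hi)) j G A Hj) v) Hv) as (qf & Hqf & Hrun).
  apply Hno. exists j, (length v), ax, G, A, v, qf, zf. repeat split; auto.
Qed.

Lemma counter_inv_eve_move c k c' :
  counter_inv c k -> g_is_eve (fst c) = true -> gmove c c' -> exists k', counter_inv c' k'.
Proof.
  intros (y & z & Hs & Hw & Hr) He Hm.
  apply gt_move_inv in Hm. destruct Hm as (p' & al & q' & be & w & Hrule & -> & ->).
  remember ((p', al), (q', be)) as rl eqn:Erl.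
  destruct Hrule as [ | i ax qf Hi Hqf | i ax p r q Hi Ht | i ax Hi | | | ];
    injection Erl as <- <- <- <-; simpl in Hs, He, Hr; try discriminate.
  - apply stk_eq_snoc_none in Hs. subst y. simpl in Hw. subst z. contradiction.
  - exists 0, y, z. rewrite app_nil_r in *. split; [exact Hs | split; [exact Hw|]].
    exists ax, [], qf, z. repeat split; auto. constructor.
  - destruct Hr as (ax' & u & qf & zf & Hax & Hrun & Hqf & Hu & HB).
    apply stk_eq_snoc_some in Hs. destruct Hs as (y' & -> & ->).
    apply word_rel_app in Hw. destruct Hw as (z1 & Hw1 & z' & Hr' & Heq). simpl in Heq. subst z'.
    exists 0, y', z1. rewrite app_nil_r. split; [reflexivity | split; [exact Hw1|]].
    exists ax', (r :: u), qf, zf. repeat split; auto; [econstructor; eauto | simpl; eauto].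
  - destruct (not_lhs_refutes_G i ax z Hi (refutes_H_init_lhs i ax z Hi Hr)) as (j & k' & Hj).
    exists (S k'), y, z. rewrite app_nil_r in *. split; [exact Hs | split; [exact Hw|]].
    exists j, k'. split; [lia | exact Hj].
Qed.

Lemma counter_inv_adam_move c k : counter_inv c k -> g_is_eve (fst c) = false ->
  exists c' k', gmove c c' /\ counter_inv c' k' /\ (g_is_eve (fst c') = false -> k' < k).
Proof.
  destruct c as [p st]. intros (y & z & Hs & Hw & Hr) He. simpl in Hs, Hr. subst st.
  destruct p as [A|i q|i|i j q|]; simpl in He, Hr; try discriminate; [| |contradiction].
  - destruct Hr as (j & k' & Hk' & Hj).
    destruct Hj as (ax & G & A & v & qf & zf & Hi & Hj & Hrest).
    exists (QG i j (nfa_init (nfaG i j)), stk y), k'.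
    split; [apply gt_move_nil; econstructor; eauto|].
    split; [|intros _; exact Hk'].
    exists y, z. split; [reflexivity | split; [exact Hw|]]. exists ax, G, A, v, qf, zf. auto.
  - destruct Hr as (ax & G & A & v & qf & zf & Hi & Hj & Hrun & Hqf & <- & Hv & HA).
    destruct v as [|r v]; inversion Hrun as [|p r' q' w s Ht Hrun']; subst.
    + simpl in Hv. subst zf. exists (QC A, stk y), 0.
      split; [apply gt_move_nil; econstructor; eauto|]. split; [|discriminate].
      exists y, z. auto.
    + destruct Hv as (z1 & Hz1 & Hv).
      exists (QG i j q', stk (y ++ [r])), (length v). split; [|split; [|simpl; lia]].
      * rewrite stk_app. rewrite <- (app_nil_r (stk y)) at 1. apply gt_move. econstructor; eauto.
      * exists (y ++ [r]), z1. split; [reflexivity|]. split.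
        -- apply word_rel_app. exists z. split; [exact Hw | simpl; eauto].
        -- exists ax, G, A, v, qf, zf. repeat split; auto.
Qed.

End AdamWins.

Fixpoint nat_of_list (l : list nat) : nat :=
  match l with
  | [] => 0
  | a :: l' => S (Cantor.to_nat (a, nat_of_list l'))
  end.

Lemma cantor_to_nat_inj a b : Cantor.to_nat a = Cantor.to_nat b -> a = b.
Proof.
  intros H. rewrite <- (Cantor.cancel_of_to a), <- (Cantor.cancel_of_to b), H. reflexivity.
Qed.

Lemma nat_of_list_inj l l' : nat_of_list l = nat_of_list l' -> l = l'.
Proof.
  revert l'. induction l as [|a l IH]; intros [|a' l'] H; cbn [nat_of_list] in H;
    try discriminate; [reflexivity|].
  apply Nat.succ_inj, cantor_to_nat_inj in H. injection H as -> H. f_equal. auto.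
Qed.

Definition code_gstate (p : gstate) : list nat :=
  match p with
  | QC a => [0; a]
  | QH i q => [1; i; q]
  | Ptau i => [2; i]
  | QG i j q => [3; i; j; q]
  | Pwin => [4]
  end.

Definition code_gsym (o : gsym) : nat := match o with None => 0 | Some r => S r end.

Definition enc_config (c : config gstate gsym) : nat :=
  nat_of_list (nat_of_list (code_gstate (fst c)) :: map code_gsym (snd c)).

Lemma enc_config_inj c c' : enc_config c = enc_config c' -> c = c'.
Proof.
  destruct c as [p w], c' as [p' w']. unfold enc_config. cbn [fst snd]. intros H.
  apply nat_of_list_inj in H. injection H as Hp Hw. apply nat_of_list_inj in Hp. f_equal.
  - destruct p, p'; simpl in Hp; congruence.
  - revert w' Hw. induction w as [|o w IH]; intros [|o' w'] Hw; simpl in Hw; try discriminate;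
      [reflexivity|].
    injection Hw as Ho Hw. f_equal; [|auto]. destruct o, o'; simpl in Ho; congruence.
Qed.

Lemma subsumed_GT_eve_wins T L R nfaH nfaG :
  good_automata T nfaH nfaG -> subsumed T L R -> GT_eve_wins T L nfaH nfaG (QC R, [None]).
Proof.
  intros hauto Hsub. apply (fwin_eve_wins _ _ _ _ _ (fun _ => eq_refl) enc_config enc_config_inj).
  exact (subsumed_fwin T L nfaH nfaG hauto R Hsub).
Qed.

Lemma GT_eve_wins_subsumed T L R nfaH nfaG :
  good_automata T nfaH nfaG -> GT_eve_wins T L nfaH nfaG (QC R, [None]) -> subsumed T L R.
Proof.
  intros hauto Hwin I HI x HL. apply NNPP. intros HR.
  apply (inv_not_eve_wins _ _ _ _ _ (fun _ => eq_refl) _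
           (counter_inv_eve_move T L nfaH nfaG hauto I x HI HL)
           (counter_inv_adam_move T L nfaH nfaG I x) _ 0) in Hwin; [exact Hwin|].
  exists [], x. split; [reflexivity | split; [reflexivity | exact HR]].
Qed.

Theorem theorem3 (T : TBox) (L R : CN)
    (nfaH : nat -> nfa) (nfaG : nat -> nat -> nfa)
    (hform : forall ax, In ax T -> ax_lhs ax <> [])
    (hauto : good_automata T nfaH nfaG) :
  GT_eve_wins T L nfaH nfaG (QC R, [None]) <-> subsumed T L R.
Proof.
  split; [apply GT_eve_wins_subsumed | apply subsumed_GT_eve_wins]; exact hauto.
Qed.
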